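(* Let $c$ be a positive integer and let $G=(V,E)$ be a graph on $n$ vertices such that at least $3n/4$ of its vertices have degree at least $4c$. Then $G$ has at most $5n/6$ $c$-edge-connected components.
   Context: Graphs are undirected and may have parallel edges but no self-loops. A graph is $c$-edge-connected if it has no cut of size $<c$; a single vertex is $c$-edge-connected. The $c$-edge-connected components are the maximal induced $c$-edge-connected subgraphs; their vertex sets partition $V$. *)

(* A finite multigraph (parallel edges allowed, no self-loops)
   on a finite vertex type V is given by a multiplicity function
   m : V -> V -> nat (m x y = number of edges between x and y), which is
   required to be symmetric with m x x = 0 (as hypotheses of the theorem). *)
From mathcomp Require Import all_boot.
Set Implicit Arguments. Unset Strict Implicit. Unset Printing Implicit Defensive.

Section Multigraph.
Variable V : finType.
Variable m : V -> V -> nat.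

Definition deg (v : V) : nat := \sum_(u : V) m v u.

Definition cut_in (A S : {set V}) : nat :=
  \sum_(x in S) \sum_(y in A :\: S) m x y.

(* G[A] is c-edge-connected: no cut of size < c, i.e. every split of A into
   a nonempty S and nonempty A \ S has at least c crossing edges.
   (A single vertex is c-edge-connected vacuously.) *)
Definition edge_conn (c : nat) (A : {set V}) : bool :=
  [forall S : {set V},
     [&& S \subset A, S != set0 & S != A] ==> (c <= cut_in A S)].

Definition ecc_components (c : nat) : {set {set V}} :=
  [set A : {set V} | [&& A != set0, edge_conn c A &
     [forall B : {set V}, ((A \subset B) && edge_conn c B) ==> (B == A)]]].

End Multigraph.

From mathcomp Require Import all_boot zify.
Set Implicit Arguments. Unset Strict Implicit. Unset Printing Implicit Defensive.

(* Two c-edge-connected sets that meet have a c-edge-connected union, so the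
   components partition V, and a set that is a union of components but not a
   single one has a cut of size < c separating two unions of components.
   Splitting along such cuts shows by induction that at most c(k - 1) edges
   join distinct components, k being the number of components.  A vertex of
   degree >= 4c forming a component by itself sends all its edges to other
   components, hence there are at most k/2 such vertices.  Every other
   component has at least two vertices or is one of the <= n/4 vertices of
   low degree, so 2k <= n + k/2 + n/4, i.e. 6k <= 5n. *)

Lemma leq_sum_subset (T : finType) (A B : {set T}) (F : T -> nat) :
  A \subset B -> \sum_(i in A) F i <= \sum_(i in B) F i.
Proof.
by move=> sAB; rewrite [X in _ <= X](big_setID A) (setIidPr sAB) leq_addr.
Qed.

Section EdgeConnectivity.

Variables (V : finType) (m : V -> V -> nat) (c : nat).
Hypothesis msym : forall x y, m x y = m y x.
Hypothesis mloop : forall x, m x x = 0.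

Local Notation comps := (ecc_components m c).

Lemma cut_in_subset (A U S : {set V}) :
  A \subset U -> cut_in m A (A :&: S) <= cut_in m U S.
Proof.
move=> sAU; apply: leq_trans (leq_sum_subset _ (subsetIr A S)).
apply: leq_sum => x _; apply: leq_sum_subset; apply/subsetP => y.
rewrite !inE => /andP[yNAS yA]; rewrite (subsetP sAU) // andbT.
by apply: contra yNAS => ->; rewrite yA.
Qed.

Lemma edge_conn_cut_side (A U S : {set V}) :
    edge_conn m c A -> A \subset U -> cut_in m U S < c ->
  (A \subset S) || (A \subset ~: S).
Proof.
move=> /forallP/(_ (A :&: S))/implyP cA sAU ltc; apply: contraTT ltc.
rewrite negb_or -disjoints_subset -setI_eq0 -leqNgt => /andP[nsAS nAS0].
apply: leq_trans (cut_in_subset S sAU); apply: cA.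
rewrite subsetIl nAS0; apply: contra nsAS => /eqP <-; exact: subsetIr.
Qed.

Lemma edge_connU (A B : {set V}) :
    edge_conn m c A -> edge_conn m c B -> A :&: B != set0 ->
  edge_conn m c (A :|: B).
Proof.
move=> cA cB /set0Pn[z /setIP[zA zB]].
apply/forallP => S; apply/implyP => /and3P[sSAB nS0 nSAB].
rewrite leqNgt; apply/negP => ltc.
have /orP[sAS|sASC] := edge_conn_cut_side cA (subsetUl A B) ltc;
  have /orP[sBS|sBSC] := edge_conn_cut_side cB (subsetUr A B) ltc.
- by move/negP: nSAB; apply; rewrite eqEsubset sSAB subUset sAS.
- by move/subsetP/(_ z zB): sBSC; rewrite inE (subsetP sAS z zA).
- by move/subsetP/(_ z zA): sASC; rewrite inE (subsetP sBS z zB).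
- have [x xS] := set0Pn _ nS0.
  by move: (subsetP sSAB x xS); rewrite inE => /orP[/(subsetP sASC)|/(subsetP sBSC)];
    rewrite inE xS.
Qed.

Lemma edge_conn1 (x : V) : edge_conn m c [set x].
Proof.
apply/forallP => S; apply/implyP => /and3P[].
by rewrite subset1 => /orP[] /eqP ->; rewrite eqxx // andbF.
Qed.

Lemma ecc_component_exists (x : V) : exists2 A, A \in comps & x \in A.
Proof.
pose P (B : {set V}) := (x \in B) && edge_conn m c B.
have Px : P [set x] by rewrite /P set11 edge_conn1.
case: (arg_maxnP (fun B : {set V} => #|B|) Px) => A /andP[xA cA] maxA.
exists A => //; rewrite inE; apply/and3P; split=> //; first by apply/set0Pn; exists x.
apply/forallP => B; apply/implyP => /andP[sAB cB].
by rewrite eq_sym eqEcard sAB; apply: maxA; rewrite /P (subsetP sAB) ?cB.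
Qed.

Lemma ecc_components_meet (A B : {set V}) :
  A \in comps -> B \in comps -> A :&: B != set0 -> A = B.
Proof.
rewrite !inE => /and3P[_ cA /forallP maxA] /and3P[_ cB /forallP maxB] nAB0.
have cAB := edge_connU cA cB nAB0.
have /eqP eA : A :|: B == A by apply: (implyP (maxA _)); rewrite subsetUl cAB.
have /eqP eB : A :|: B == B by apply: (implyP (maxB _)); rewrite subsetUr cAB.
exact: etrans (esym eA) eB.
Qed.

Lemma partition_ecc_components : partition comps [set: V].
Proof.
apply/and3P; split; last by rewrite inE eqxx.
  apply/eqP/setP => x; rewrite in_setT; apply/bigcupP.
  by have [A] := ecc_component_exists x; exists A.
apply/trivIsetP => A B cA cB; apply: contraNT; rewrite -setI_eq0.
by move/(ecc_components_meet cA cB) ->.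
Qed.

Local Notation comp := (pblock comps).

Let cover_comps : cover comps = [set: V].
Proof. by case/and3P: partition_ecc_components => /eqP. Qed.

Let trivIset_comps : trivIset comps.
Proof. exact: partition_trivIset partition_ecc_components. Qed.

Lemma comp_ecc (x : V) : comp x \in comps.
Proof. by apply: pblock_mem; rewrite cover_comps. Qed.

Lemma mem_comp (x : V) : x \in comp x.
Proof. by rewrite mem_pblock cover_comps. Qed.

Lemma comp_eq (x y : V) : y \in comp x -> comp y = comp x.
Proof. exact: same_pblock. Qed.

Lemma edge_conn_comp (x : V) : edge_conn m c (comp x).
Proof. by have := comp_ecc x; rewrite inE => /and3P[]. Qed.

Lemma edge_conn_comp_eq (U : {set V}) (x : V) :
  edge_conn m c U -> comp x \subset U -> U = comp x.
Proof.
move=> cU sxU; have := comp_ecc x; rewrite inE => /and3P[_ _ /forallP/(_ U)].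
by rewrite sxU cU => /eqP.
Qed.

Definition cross_edges (U : {set V}) : nat :=
  \sum_(x in U) \sum_(y in U | comp x != comp y) m x y.

Definition comp_closed (U : {set V}) : Prop :=
  forall x, x \in U -> comp x \subset U.

Lemma comp_closed_apart (S : {set V}) (x y : V) :
  comp_closed S -> x \in S -> y \notin S -> comp x != comp y.
Proof.
by move=> clS xS; apply: contra => /eqP exy; rewrite (subsetP (clS x xS)) // exy mem_comp.
Qed.

Lemma comp_closedD (U S : {set V}) :
  comp_closed U -> comp_closed S -> comp_closed (U :\: S).
Proof.
move=> clU clS x /setDP[xU xNS]; apply/subsetP => y yx.
rewrite inE (subsetP (clU x xU)) // andbT; apply: contra xNS => /clS.
by rewrite (comp_eq yx) => /subsetP; apply; exact: mem_comp.
Qed.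

Lemma comp_closed_cut (U S : {set V}) :
  comp_closed U -> S \subset U -> cut_in m U S < c -> comp_closed S.
Proof.
move=> clU sSU ltc x xS; have xU := subsetP sSU x xS.
case/orP: (edge_conn_cut_side (edge_conn_comp x) (clU x xU) ltc) => //.
by move/subsetP/(_ x (mem_comp x)); rewrite inE xS.
Qed.

Lemma cross_edges_comp (x : V) : cross_edges (comp x) = 0.
Proof.
apply: big1 => y yx; apply: big1 => z /andP[zx].
by rewrite (comp_eq yx) (comp_eq zx) eqxx.
Qed.

Lemma cross_edges_split (U S : {set V}) :
    S \subset U -> comp_closed S ->
  cross_edges U = cross_edges S + cross_edges (U :\: S) + 2 * cut_in m U S.
Proof.
move=> sSU clS.
have inS x : x \in S -> \sum_(y in U | comp x != comp y) m x y =
    \sum_(y in S | comp x != comp y) m x y + \sum_(y in U :\: S) m x y.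
  move=> xS; rewrite (big_setIDcond _ U S) /= (setIidPr sSU); congr (_ + _).
  by apply: eq_bigl => y; apply: andb_idr => /setDP[_]; apply: comp_closed_apart.
have notS x : x \in U :\: S -> \sum_(y in U | comp x != comp y) m x y =
    \sum_(y in S) m x y + \sum_(y in U :\: S | comp x != comp y) m x y.
  move=> /setDP[_ xNS]; rewrite (big_setIDcond _ U S) /= (setIidPr sSU).
  congr (_ + _); apply: eq_bigl => y; apply: andb_idr => yS.
  by rewrite eq_sym (comp_closed_apart clS yS xNS).
rewrite /cross_edges (big_setID S) /= (setIidPr sSU).
rewrite (eq_bigr _ inS) (eq_bigr _ notS) !big_split /=.
have -> : \sum_(x in U :\: S) \sum_(y in S) m x y = cut_in m U S.
  rewrite /cut_in exchange_big; apply: eq_bigr => x _.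
  by apply: eq_bigr => y _; exact: msym.
rewrite /cut_in; lia.
Qed.

Lemma card_comp_imset_split (U S : {set V}) :
    S \subset U -> comp_closed S ->
  #|comp @: U| = #|comp @: S| + #|comp @: (U :\: S)|.
Proof.
move=> sSU clS; rewrite -{1}(setID U S) (setIidPr sSU) imsetU cardsU.
suff -> : comp @: S :&: comp @: (U :\: S) = set0 by rewrite cards0 subn0.
apply/setP => A; rewrite !inE; apply/negbTE/andP.
case=> /imsetP[x xS ->] /imsetP[y /setDP[_ yNS] exy].
by move/eqP: exy; apply/negP; apply: comp_closed_apart yNS.
Qed.

Lemma cross_edges_bound (U : {set V}) :
    U != set0 -> comp_closed U ->
  cross_edges U + 2 * c <= 2 * c * #|comp @: U|.
Proof.
have [n] := ubnP #|U|; elim: n U => // n IH U ltUn nU0 clU.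
have [cU | /forallPn[S]] := boolP (edge_conn m c U).
  have [x xU] := set0Pn _ nU0.
  rewrite (edge_conn_comp_eq cU (clU x xU)) cross_edges_comp add0n leq_pmulr //.
  by rewrite card_gt0; apply/set0Pn; exists (comp x); rewrite imset_f ?mem_comp.
rewrite negb_imply -ltnNge => /andP[/and3P[sSU nS0 nSU] ltc].
have clS := comp_closed_cut clU sSU ltc.
have nT0 : U :\: S != set0.
  by rewrite setD_eq0; apply: contra nSU => sUS; rewrite eqEsubset sSU.
have := cardsID S U; rewrite (setIidPr sSU) => cardU.
have := card_gt0 S; have := card_gt0 (U :\: S); rewrite nS0 nT0 => T_gt0 S_gt0.
have := IH S ltac:(lia) nS0 clS.
have := IH (U :\: S) ltac:(lia) nT0 (comp_closedD clU clS).
rewrite (cross_edges_split sSU clS) (card_comp_imset_split sSU clS); nia.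
Qed.

Lemma cross_edges_setT : cross_edges [set: V] <= 2 * c * #|comps|.
Proof.
have [VT0|nVT0] := eqVneq [set: V] set0.
  by rewrite /cross_edges VT0 big_set0.
have sub_comps : comp @: [set: V] \subset comps.
  by apply/subsetP => _ /imsetP[x _ ->]; exact: comp_ecc.
apply: leq_trans (leq_addr (2 * c) _) _.
apply: leq_trans (cross_edges_bound nVT0 (fun x _ => subsetT _)) _.
by rewrite leq_mul2l subset_leq_card ?orbT.
Qed.

Lemma deg_le_cross_edges (v : V) :
  [set v] \in comps -> deg m v <= \sum_(y in [set: V] | comp v != comp y) m v y.
Proof.
move=> vcomp; rewrite /deg (bigID (fun y => comp v != comp y)) /=.
rewrite [X in _ + X]big1 ?addn0.
  by apply: eq_leq; apply: eq_bigl => y; rewrite in_setT.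
move=> y; rewrite negbK (def_pblock trivIset_comps vcomp (set11 v)) => /eqP vy.
have : y \in [set v] by rewrite vy mem_comp.
by rewrite inE => /eqP ->.
Qed.

Lemma card_high_degree_singletons : 0 < c ->
  2 * #|[set v | [set v] \in comps] :&: [set v | 4 * c <= deg m v]| <= #|comps|.
Proof.
move=> c_gt0; set X := _ :&: _.
have degX : #|X| * (4 * c) <= \sum_(v in X) deg m v.
  by rewrite -sum_nat_const; apply: leq_sum => v /setIP[_]; rewrite inE.
have : \sum_(v in X) deg m v <= cross_edges [set: V].
  apply: leq_trans (leq_sum_subset _ (subsetT X)).
  by apply: leq_sum => v /setIP[]; rewrite inE => /deg_le_cross_edges.
have := cross_edges_setT; nia.
Qed.

Lemma card_ecc_components_le :
  2 * #|comps| <= #|V| + #|[set v | [set v] \in comps]|.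
Proof.
set Y := [set v | _]; set B1 := [set A : {set V} | #|A| == 1].
have cardY : #|comps :&: B1| <= #|Y|.
  rewrite -(card_imset Y set1_inj); apply: subset_leq_card; apply/subsetP => A.
  rewrite in_setI [_ \in B1]inE => /andP[Acomp /cards1P[v Av]].
  by apply/imsetP; exists v; rewrite // inE -Av.
rewrite -cardsT (card_partition partition_ecc_components) (big_setID B1) /=.
rewrite -(cardsID B1 comps) mulnDr addnAC; apply: leq_add.
  rewrite mul2n -addnn; apply: leq_add => //; rewrite -sum1_card.
  by apply: eq_leq; apply: eq_bigr => A; rewrite in_setI [_ \in B1]inE => /andP[_ /eqP].
rewrite mulnC -sum_nat_const; apply: leq_sum => A.
rewrite in_setD [_ \in B1]inE => /andP[A1 Acomp].
have := partition_neq0 partition_ecc_components Acomp.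
by rewrite -card_gt0; move: A1; lia.
Qed.

End EdgeConnectivity.

Theorem lemma2 (V : finType) (m : V -> V -> nat) (c : nat) :
  (forall x y : V, m x y = m y x) ->
  (forall x : V, m x x = 0) ->
  0 < c ->
  3 * #|V| <= 4 * #|[set v : V | 4 * c <= deg m v]| ->
  6 * #|ecc_components m c| <= 5 * #|V|.
Proof.
move=> msym mloop c_gt0 highD.
have compsY := card_ecc_components_le m c.
have highY := card_high_degree_singletons msym mloop c_gt0.
set Y := [set v | [set v] \in ecc_components m c] in compsY highY *.
set D := [set v | 4 * c <= deg m v] in highD highY *.
have lowY : #|Y :\: D| <= #|~: D|.
  by apply/subset_leq_card/subsetP => v /setDP[_ vD]; rewrite inE.
have := cardsID D Y; have := cardsC D; lia.
Qed.
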